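(* Let $A_1,\dots,A_N$ be symmetric $N\times N$ matrices over $\mathbb{F}_2$ with $(A_i)_{k,k}=\delta_{ik}$ for all $i,k$, let $A(z)=\sum_{i=1}^Nz(i)A_i$ for $z\in\mathbb{F}_2^N$, and let $C$ be any fixed symmetric $N\times N$ matrix over $\mathbb{F}_2$. Then for every integer $1\le k\le N$, with $z$ uniform in $\mathbb{F}_2^N$, $$\Pr_z\big\{\operatorname{rank}(A(z)+C)\le k-1\big\}\le\frac1{2^N}\sum_{i=0}^{k-1}\binom{N}{i}.$$ *)

From mathcomp Require Import all_boot all_order all_algebra.
Set Implicit Arguments. Unset Strict Implicit. Unset Printing Implicit Defensive.
Import GRing.Theory Num.Theory.
Local Open Scope ring_scope.

Definition Aof (N : nat) (A : 'I_N -> 'M['F_2]_N) (z : 'rV['F_2]_N) : 'M['F_2]_N :=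
  \sum_(i < N) z 0 i *: A i.

Definition prob_unif (N : nat) (P : pred 'rV['F_2]_N) : rat :=
  (#|[set z | P z]|%:R / #|{: 'rV['F_2]_N}|%:R)%R.

(* Let S be the set of z with rank (A(z) + C) < k.  For |T| = k the principal
   minor of A(z) + C on T vanishes on S.  Over F_2, the permutations of the
   determinant expansion that are not involutions cancel in pairs, a non-trivial
   involution meets some entry twice (and x^2 = x), and the identity contributes
   prod_(i in T) (z_i + C_ii); so this minor is the monomial z^T plus a polynomial
   of degree < k.  Hence on S every monomial, and therefore every function
   S -> F_2, is a multilinear polynomial of degree < k, and counting gives
   2^|S| <= 2^(sum_(i<k) binom(N, i)). *)

From mathcomp Require Import all_boot all_order all_algebra fingroup perm zify.
Import GRing.Theory Num.Theory.
Set Implicit Arguments. Unset Strict Implicit. Unset Printing Implicit Defensive.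
Local Open Scope ring_scope.

Lemma pchar_F2 : 2 \in [pchar 'F_2]. Proof. exact: pchar_Fp. Qed.

Lemma F2_cases (x : 'F_2) : x = 0 \/ x = 1.
Proof. by case: x => [[|[|m]]] //= H; [left|right]; exact/val_inj. Qed.

Lemma mulrr_F2 (x : 'F_2) : x * x = x.
Proof. by case: (F2_cases x) => ->; rewrite ?mul0r ?mul1r. Qed.

Section BooleanFunctions.
Variable n : nat.
Implicit Types (d : nat) (z x : 'rV['F_2]_n) (U V : {set 'I_n}).
Implicit Types (h g : 'rV['F_2]_n -> 'F_2).

Definition monomial U z : 'F_2 := (U \subset [set i | z 0 i == 1])%:R.

Lemma monomialU U V z : monomial (U :|: V) z = monomial U z * monomial V z.
Proof. by rewrite /monomial subUset -mulnb natrM. Qed.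

Lemma monomial0 z : monomial set0 z = 1.
Proof. by rewrite /monomial sub0set. Qed.

Lemma monomial1 i z : monomial [set i] z = z 0 i.
Proof. by rewrite /monomial sub1set inE; case: (F2_cases (z 0 i)) => ->. Qed.

Lemma monomialE U z : monomial U z = \prod_(i in U) z 0 i.
Proof.
rewrite /monomial; have [/subsetP sUz | /subsetPn [i iU]] := boolP (U \subset _).
  by rewrite big1 // => i /sUz; rewrite inE => /eqP.
by rewrite (bigD1 i) //= inE; case: (F2_cases (z 0 i)) => -> //; rewrite mul0r.
Qed.

Definition deg_le d h := exists b : {ffun {set 'I_n} -> 'F_2},
  (forall V, (d < #|V|)%N -> b V = 0) /\ h =1 (fun z => \sum_V b V * monomial V z).

Lemma deg_le_eq d h g : deg_le d h -> h =1 g -> deg_le d g.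
Proof. by move=> [b [b_small hE]] hg; exists b; split=> // z; rewrite -hg. Qed.

Lemma deg_leW d d' h : (d <= d')%N -> deg_le d h -> deg_le d' h.
Proof.
by move=> le_dd' [b [b_small hE]]; exists b; split=> // V /(leq_ltn_trans le_dd')/b_small.
Qed.

Lemma deg_le_monomial U : deg_le #|U| (monomial U).
Proof.
exists [ffun V => (V == U)%:R]; split=> [V | z].
  by rewrite ffunE; case: eqP => // ->; rewrite ltnn.
rewrite (bigD1 U) //= ffunE eqxx mul1r big1 ?addr0 // => V /negbTE VU.
by rewrite ffunE VU mul0r.
Qed.

Lemma deg_le_var i : deg_le 1 (fun z => z 0 i).
Proof. by apply: deg_le_eq (monomial1 i); rewrite -(cards1 i); apply: deg_le_monomial. Qed.

Lemma deg_leZ a d h : deg_le d h -> deg_le d (fun z => a * h z).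
Proof.
move=> [b [b_small hE]]; exists [ffun V => a * b V]; split=> [V /b_small | z].
  by rewrite ffunE => ->; rewrite mulr0.
by rewrite hE mulr_sumr; apply: eq_bigr => V _; rewrite ffunE mulrA.
Qed.

Lemma deg_le_cst a d : deg_le d (fun=> a).
Proof.
have := deg_leZ a (deg_le_monomial set0); rewrite cards0 => /(deg_leW (leq0n d)).
by move/deg_le_eq; apply=> z; rewrite monomial0 mulr1.
Qed.

Lemma deg_leD d h g : deg_le d h -> deg_le d g -> deg_le d (fun z => h z + g z).
Proof.
move=> [b [b_small hE]] [c [c_small gE]]; exists [ffun V => b V + c V]; split.
  by move=> V lt_dV; rewrite ffunE b_small // c_small // addr0.
by move=> z; rewrite hE gE -big_split; apply: eq_bigr => V _; rewrite ffunE mulrDl.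
Qed.

Lemma deg_leB d h g : deg_le d h -> deg_le d g -> deg_le d (fun z => h z - g z).
Proof.
by move=> hd gd; apply: deg_le_eq (deg_leD hd gd) _ => z; rewrite (oppr_pchar2 pchar_F2).
Qed.

Lemma deg_leM d1 d2 h g :
  deg_le d1 h -> deg_le d2 g -> deg_le (d1 + d2) (fun z => h z * g z).
Proof.
move=> [b [b_small hE]] [c [c_small gE]].
exists [ffun U => \sum_(VW : {set 'I_n} * {set 'I_n} | VW.1 :|: VW.2 == U) b VW.1 * c VW.2].
split=> [U lt_U | z].
  rewrite ffunE big1 // => -[V W] /= /eqP UE.
  have [/b_small -> | le_V] := ltnP d1 #|V|; first by rewrite mul0r.
  have [/c_small -> | le_W] := ltnP d2 #|W|; first by rewrite mulr0.
  by move: lt_U; rewrite -UE ltnNge (leq_trans (leq_card_setU V W).1) // leq_add.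
rewrite hE gE mulr_suml.
under eq_bigr do rewrite mulr_sumr.
rewrite pair_bigA /= (partition_big (fun VW => VW.1 :|: VW.2) predT) //=.
apply: eq_bigr => U _; rewrite ffunE mulr_suml; apply: eq_bigr => VW /eqP <-.
by rewrite monomialU mulrACA.
Qed.

Lemma deg_le_sum (I : finType) (P : pred I) d (F : I -> 'rV['F_2]_n -> 'F_2) :
  (forall i, P i -> deg_le d (F i)) -> deg_le d (fun z => \sum_(i | P i) F i z).
Proof.
move=> Fd; suff: forall r, deg_le d (fun z => \sum_(i <- r | P i) F i z) by apply.
elim=> [|i r IH]; first by apply: deg_le_eq (deg_le_cst 0 d) _ => z; rewrite big_nil.
by case Pi: (P i); [move: (deg_leD (Fd i Pi) IH) | move: IH];
  move/deg_le_eq; apply=> z; rewrite big_cons ?Pi.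
Qed.

Lemma deg_le_prod (I : eqType) (r : seq I) (P : pred I) (d : I -> nat)
    (F : I -> 'rV['F_2]_n -> 'F_2) :
  (forall i, P i -> deg_le (d i) (F i)) ->
  deg_le (\sum_(i <- r | P i) d i) (fun z => \prod_(i <- r | P i) F i z).
Proof.
move=> Fd; elim: r => [|i r IH].
  by rewrite big_nil; apply: deg_le_eq (deg_le_cst 1 0) _ => z; rewrite big_nil.
rewrite big_cons; case Pi: (P i); [move: (deg_leM (Fd i Pi) IH) | move: IH];
  by move/deg_le_eq; apply=> z; rewrite big_cons ?Pi.
Qed.

Lemma deg_le_prod_affine (c : 'I_n -> 'F_2) (r : seq 'I_n) :
  deg_le (size r) (fun z => \prod_(i <- r) (z 0 i + c i)).
Proof.
rewrite -sum1_size; apply: (@deg_le_prod _ r predT) => i _.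
exact: deg_leD (deg_le_var i) (deg_le_cst (c i) 1).
Qed.

Lemma deg_le_monomial_sub_affine (c : 'I_n -> 'F_2) (r : seq 'I_n) :
  deg_le (size r).-1 (fun z => \prod_(i <- r) z 0 i - \prod_(i <- r) (z 0 i + c i)).
Proof.
elim: r => [|i [|j r] IH].
- by apply: deg_le_eq (deg_le_cst 0 0) _ => z; rewrite !big_nil subrr.
- apply: deg_le_eq (deg_le_cst (- c i) 0) _ => z.
  by rewrite !big_seq1 opprD addrA subrr add0r.
- have := deg_leD (deg_leM (deg_le_var i) IH)
                   (deg_leZ (- c i) (deg_le_prod_affine c (j :: r))).
  move/deg_le_eq; apply=> z.
  rewrite [\prod_(k <- i :: _) z 0 k]big_cons [\prod_(k <- i :: _) (z 0 k + c k)]big_cons.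
  by rewrite mulrBr mulrDl mulNr opprD addrA.
Qed.

Lemma deg_le_full h : deg_le n h.
Proof.
have indicatorE x z : (z == x)%:R = \prod_(i <- enum 'I_n) (z 0 i + (1 + x 0 i)).
  rewrite big_enum /=; have [-> | neq_zx] := eqVneq z x.
    by rewrite big1 // => i _; rewrite addrCA (addrr_pchar2 pchar_F2) addr0.
  have [i neq_i] : exists i, z 0 i != x 0 i.
    apply/existsP; apply: contraNT neq_zx => /existsPn eq_zx.
    by apply/eqP/rowP => i; apply/eqP/negPn/eq_zx.
  rewrite (bigD1 i) //=.
  case: (F2_cases (z 0 i)) neq_i => ->; case: (F2_cases (x 0 i)) => -> // _;
    by rewrite ?add0r ?addr0 (addrr_pchar2 pchar_F2) mul0r.
have indicator_deg x : deg_le n (fun z => (z == x)%:R).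
  have := deg_le_prod_affine (fun i => 1 + x 0 i) (enum 'I_n).
  by rewrite size_enum_ord; move/deg_le_eq; apply=> z; rewrite indicatorE.
apply: deg_le_eq (deg_le_sum (P := predT) (fun x _ => deg_leZ (h x) (indicator_deg x))) _.
move=> z; rewrite (bigD1 z) //= eqxx mulr1 big1 ?addr0 // => x /negbTE.
by rewrite eq_sym => ->; rewrite mulr0.
Qed.

End BooleanFunctions.

Arguments deg_le_cst {n}.

(* The points moved by [g] split into those preceding their image in the
   enumeration of [I] and those following it, and [g] swaps the two halves. *)
Lemma sum_nonfixed_pchar2 (R : nzRingType) (I : finType) (g : I -> I) (F : I -> R) :
  2 \in [pchar R] -> involutive g -> (forall i, F (g i) = F i) ->
  \sum_(i | g i != i) F i = 0.
Proof.
move=> R2 gK Fg; pose r := @enum_rank I.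
rewrite (bigID (fun i => r i < r (g i))%N) /=.
suff -> : \sum_(i | (g i != i) && ~~ (r i < r (g i))%N) F i =
          \sum_(i | (g i != i) && (r i < r (g i))%N) F i by rewrite addrr_pchar2.
rewrite (reindex_inj (inv_inj gK)) /=; apply: eq_big => [i|i _]; last exact: Fg.
rewrite gK eq_sym -leqNgt leq_eqVlt; case: eqVneq => //= neq_gi.
by rewrite val_eqE (inj_eq enum_rank_inj) eq_sym (negbTE neq_gi).
Qed.

Lemma det_pchar2 (R : comNzRingType) n (M : 'M[R]_n) :
  2 \in [pchar R] -> \det M = \sum_(s : 'S_n) \prod_i M i (s i).
Proof.
move=> R2; apply: eq_bigr => s _.
by rewrite (oppr_pchar2 R2) expr1n mul1r.
Qed.

Lemma det_sym_pchar2 (R : comNzRingType) n (M : 'M[R]_n) :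
  2 \in [pchar R] -> M^T = M ->
  \det M = \sum_(s : 'S_n | (s^-1)%g == s) \prod_i M i (s i).
Proof.
move=> R2 M_sym; rewrite det_pchar2 // (bigID (fun s : 'S_n => (s^-1)%g == s)) /=.
rewrite [X in _ + X](@sum_nonfixed_pchar2 _ _ (fun s => s^-1)%g) ?addr0 //.
  exact: invgK.
move=> s; rewrite (reindex_inj (@perm_inj _ s)) /=.
by apply: eq_bigr => i _; rewrite permK -[in LHS]M_sym mxE.
Qed.

(* The principal submatrix of [M] on [T], padded with the identity outside [T]:
   its determinant is the principal minor on [T], without reindexing. *)
Definition pad_mx (R : nzRingType) n (T : {set 'I_n}) (M : 'M[R]_n) : 'M[R]_n :=
  \matrix_(a, b) if (a \in T) && (b \in T) then M a b else (a == b)%:R.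

Lemma tr_pad_mx (R : nzRingType) n (T : {set 'I_n}) (M : 'M[R]_n) :
  (pad_mx T M)^T = pad_mx T M^T.
Proof. by apply/matrixP => a b; rewrite !mxE andbC eq_sym. Qed.

Lemma mxrank_sum_le (F : fieldType) m n (I : Type) (r : seq I) (P : pred I)
    (B : I -> 'M[F]_(m, n)) :
  (\rank (\sum_(i <- r | P i) B i)%R <= \sum_(i <- r | P i) \rank (B i))%N.
Proof.
elim/big_ind2: _ => [|A a A' a' rkA rkA'|//]; first by rewrite mxrank0.
exact: leq_trans (mxrank_add A A') (leq_add rkA rkA').
Qed.

Lemma det_pad_mx_eq0 (F : fieldType) n (T : {set 'I_n}) (M : 'M[F]_n) :
  (0 < #|T|)%N -> (\rank M < #|T|)%N -> \det (pad_mx T M) = 0.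
Proof.
move=> T_gt0 rankM.
pose D := diag_mx (\row_i (i \in T)%:R : 'rV[F]_n).
pose E := diag_mx (\row_i (i \notin T)%:R : 'rV[F]_n).
have padE : pad_mx T M = D *m M *m D + E.
  apply/matrixP => a b; rewrite mul_mx_diag mul_diag_mx !mxE.
  case: eqVneq => [<-|_]; case: (a \in T); case: (b \in T);
  by rewrite /= ?mulr1n ?mulr0n ?mul1r ?mulr1 ?mul0r ?mulr0 ?addr0 ?add0r.
have rankE : (\rank E <= #|~: T|)%N.
  rewrite /E diag_mx_sum_delta; apply: leq_trans (mxrank_sum_le _ _ _) _.
  rewrite -sum1_card [X in (_ <= X)%N]big_mkcond; apply: leq_sum => i _; rewrite !mxE inE.
  by case: (i \in T); rewrite /= ?scale0r ?mxrank0 ?scale1r ?mxrank_delta.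
have rank_pad : (\rank (pad_mx T M) < n)%N.
  rewrite padE; apply: leq_ltn_trans (mxrank_add _ _) _.
  have rankDMD : (\rank (D *m M *m D) <= \rank M)%N.
    exact: leq_trans (mxrankM_maxl _ _) (mxrankM_maxr _ _).
  have := leq_add (leq_ltn_trans rankDMD rankM) rankE.
  by rewrite addSn cardsC card_ord.
apply/eqP; apply: contraTT rank_pad => det_neq0.
by rewrite -leqNgt mxrank_unit // unitmxE unitfE.
Qed.

Section PaddedPrincipalMinor.
Variables (n : nat) (M : 'rV['F_2]_n -> 'M['F_2]_n) (c : 'I_n -> 'F_2).
Hypothesis M_sym : forall z, (M z)^T = M z.
Hypothesis M_affine : forall a b, deg_le 1 (fun z => M z a b).
Hypothesis M_diag : forall z a, M z a a = z 0 a + c a.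
Variable T : {set 'I_n}.

Let P z := pad_mx T (M z).

Let P_sym z a b : P z a b = P z b a.
Proof. by rewrite /P -[in LHS](M_sym z) -tr_pad_mx mxE. Qed.

Lemma deg_le_pad_mx_entry a b : deg_le (a \in T) (fun z => P z a b).
Proof.
case aT: (a \in T); last first.
  by apply: deg_le_eq (deg_le_cst (a == b)%:R 0) _ => z; rewrite mxE aT.
case bT: (b \in T); last first.
  by apply: deg_le_eq (deg_le_cst (a == b)%:R 1) _ => z; rewrite mxE aT bT.
by apply: deg_le_eq (M_affine a b) _ => z; rewrite mxE aT bT.
Qed.

Lemma deg_le_pad_mx_involution_term (s : 'S_n) :
  (s^-1)%g = s -> s != 1%g -> deg_le #|T|.-1 (fun z => \prod_i P z i (s i)).
Proof.
move=> s_inv s_neq1; have sK i : s (s i) = i by rewrite -{1}s_inv permK.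
have [i /andP [iNT si_neq] | s_in_T] := pickP (fun i => (i \notin T) && (s i != i)).
  apply: deg_le_eq (deg_le_cst 0 _) _ => z.
  by rewrite (bigD1 i) //= mxE (negbTE iNT) eq_sym (negbTE si_neq) mul0r.
have moved_in_T i : s i != i -> i \in T.
  by move=> si_neq; apply: contraFT (s_in_T i) => iNT; rewrite iNT.
have [a sa_neq] : exists a, s a != a.
  apply/existsP; apply: contraNT s_neq1 => /existsPn s_fixed.
  by apply/eqP/permP => i; rewrite perm1; apply/eqP/negPn/s_fixed.
set b := s a.
have aT := moved_in_T a sa_neq.
have bT : b \in T by apply: moved_in_T; rewrite /b sK eq_sym.
(* the 2-cycle (a b) contributes P_ab * P_ba = P_ab^2 = P_ab: one degree saved *)
have prodE z : \prod_i P z i (s i) =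
               P z a b * \prod_(i | (i != a) && (i != b)) P z i (s i).
  rewrite (bigD1 a) //= (bigD1 b) /=; last exact: sa_neq.
  by rewrite -/b {2}/b sK [P z b a]P_sym mulrA mulrr_F2.
have cardT : #|T| = (\sum_(i | (i != a) && (i != b)) (i \in T)).+2.
  rewrite -sum1_card big_mkcond (bigD1 a) //= (bigD1 b) /=; last exact: sa_neq.
  by rewrite aT bT big_mkcondl.
have := deg_leM (deg_le_pad_mx_entry a b)
  (@deg_le_prod _ _ (index_enum 'I_n) (fun i => (i != a) && (i != b)) _ _
     (fun i _ => deg_le_pad_mx_entry i (s i))).
by rewrite cardT aT; move/deg_le_eq; apply=> z; rewrite prodE.
Qed.

Lemma deg_le_pad_mx_det : deg_le #|T|.-1 (fun z => monomial T z - \det (P z)).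
Proof.
have detE z : \det (P z) = \prod_(i in T) (z 0 i + c i) +
    \sum_(s : 'S_n | ((s^-1)%g == s) && (s != 1%g)) \prod_i P z i (s i).
  rewrite det_sym_pchar2 ?pchar_F2 /P ?tr_pad_mx ?M_sym // (bigD1 1%g) ?invg1 //=.
  congr (_ + _); rewrite [RHS]big_mkcond; apply: eq_bigr => i _.
  by rewrite perm1 mxE andbb eqxx M_diag.
have := deg_le_monomial_sub_affine c (enum T); rewrite -cardE => identity_term.
have := deg_leB identity_term (deg_le_sum (fun s (Hs : ((s^-1)%g == s) && (s != 1%g)) =>
  deg_le_pad_mx_involution_term (eqP (andP Hs).1) (andP Hs).2)).
move/deg_le_eq; apply=> z.
by rewrite detE opprD addrA !big_enum monomialE.
Qed.

End PaddedPrincipalMinor.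

Lemma subset_of_card (I : finType) (U : {set I}) k :
  (k <= #|U|)%N -> exists2 T : {set I}, T \subset U & #|T| = k.
Proof.
move=> le_kU; exists [set i in take k (enum U)].
  by apply/subsetP => i; rewrite inE => /mem_take; rewrite mem_enum.
rewrite cardsE (card_uniqP (take_uniq k (enum_uniq U))).
by rewrite size_takel // -cardE.
Qed.

Lemma card_small_sets (I : finType) d :
  #|[set V : {set I} | (#|V| <= d)%N]| = (\sum_(i < d.+1) 'C(#|I|, i))%N.
Proof.
rewrite -sum1dep_card; elim: d => [|d IH].
  by rewrite big_ord1 -card_draws -sum1dep_card; apply: eq_bigl => V; rewrite leqn0.
rewrite big_ord_recr /= -IH -card_draws -sum1dep_card.
rewrite (bigID (fun V : {set I} => #|V| <= d)%N) /=; congr (_ + _)%N; apply: eq_bigl => V.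
  by apply/andb_idl/leqW.
by rewrite -ltnNge eqn_leq.
Qed.

Definition deg_le_on n (S : {set 'rV['F_2]_n}) d (h : 'rV['F_2]_n -> 'F_2) :=
  exists2 g, deg_le d g & {in S, h =1 g}.

Section Interpolation.
Variables (n d : nat) (S : {set 'rV['F_2]_n}).
Implicit Types (U V T : {set 'I_n}) (h : 'rV['F_2]_n -> 'F_2).

Lemma deg_le_onZ a h : deg_le_on S d h -> deg_le_on S d (fun z => a * h z).
Proof.
by case=> g gd hg; exists (fun z => a * g z); [apply: deg_leZ | move=> z /hg ->].
Qed.

Lemma deg_le_on_sum (I : finType) (P : pred I) (F : I -> 'rV['F_2]_n -> 'F_2) :
  (forall i, P i -> deg_le_on S d (F i)) -> deg_le_on S d (fun z => \sum_(i | P i) F i z).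
Proof.
move=> FS; have [G GP] : exists G, forall i, P i -> deg_le d (G i) /\ {in S, F i =1 G i}.
  apply: (fin_all_exists (P := fun i g => P i -> deg_le d g /\ {in S, F i =1 g})) => i.
  case: (boolP (P i)) => [/FS [g gd Fg] | nPi]; first by exists g.
  by exists (F i) => Pi; case/negP: nPi.
exists (fun z => \sum_(i | P i) G i z); first by apply: deg_le_sum => i /GP [].
by move=> z zS; apply: eq_bigr => i /GP [_ ->].
Qed.

Lemma deg_le_on_monomial :
  (forall T, #|T| = d.+1 -> deg_le_on S d (monomial T)) ->
  forall U, deg_le_on S d (monomial U).
Proof.
move=> reduce U; move: {2}#|U| (leqnn #|U|) => m; elim: m U => [|m IH] U le_Um.
  by exists (monomial U) => //; apply: deg_leW (deg_le_monomial U); lia.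
have [le_Ud | lt_dU] := leqP #|U| d.
  by exists (monomial U) => //; apply: deg_leW (deg_le_monomial U).
have [T sub_TU card_T] := subset_of_card lt_dU.
have [g [b [b_small gE]] Tg] := reduce T card_T.
have termS V : deg_le_on S d (fun z => b V * monomial (U :\: T :|: V) z).
  have [/b_small -> | le_Vd] := ltnP d #|V|.
    by exists (fun=> 0); [apply: deg_le_cst | move=> z _; rewrite mul0r].
  apply/deg_le_onZ/IH; have := (leq_card_setU (U :\: T) V).1.
  by rewrite cardsD (setIidPr sub_TU) card_T; lia.
have [g' g'd g'E] := deg_le_on_sum (P := predT) (fun V _ => termS V).
exists g' => // z zS; rewrite -g'E // -[in LHS](setID U T) (setIidPr sub_TU).
rewrite monomialU (Tg z zS) gE mulr_suml; apply: eq_bigr => V _.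
by rewrite monomialU mulrAC mulrA.
Qed.

Lemma deg_le_on_all :
  (forall U, deg_le_on S d (monomial U)) -> forall h, deg_le_on S d h.
Proof.
move=> monS h; have [b [_ hE]] := deg_le_full h.
have [g gd gE] := deg_le_on_sum (P := predT) (fun V _ => deg_le_onZ (b V) (monS V)).
by exists g => // z zS; rewrite hE gE.
Qed.

Lemma card_le_of_deg_le_on :
  (forall h, deg_le_on S d h) -> (#|S| <= \sum_(i < d.+1) 'C(n, i))%N.
Proof.
move=> interp; pose A := [set V : {set 'I_n} | (#|V| <= d)%N].
pose ev (c : {ffun {V in A} -> 'F_2}) : {ffun {z in S} -> 'F_2} :=
  [ffun s => \sum_V c V * monomial (val V) (val s)].
have ev_onto t : exists c, t = ev c.
  have [g [b [b_small gE]] tg] := interp (fun z => oapp t 0 (insub z)).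
  exists [ffun V => b (val V)]; apply/ffunP => s; rewrite !ffunE.
  have := tg (val s) (valP s); rewrite /= valK /= => ->; rewrite gE.
  rewrite (bigID (mem A)) /= [X in _ + X]big1 ?addr0 => [|V]; last first.
    by rewrite inE -ltnNge => /b_small ->; rewrite mul0r.
  by rewrite big_sub; apply: eq_bigr => V _; rewrite ffunE.
have : (#|{: {ffun {z in S} -> 'F_2}}| <= #|{: {ffun {V in A} -> 'F_2}}|)%N.
  apply: leq_trans (leq_image_card ev predT); apply/subset_leq_card/subsetP => t _.
  by have [c ->] := ev_onto t; apply: image_f.
rewrite !card_ffun card_Fp // leq_exp2l // !card_sig (eq_card (B := S)) //.
by rewrite (eq_card (B := A)) // card_small_sets card_ord.
Qed.

End Interpolation.

Section AffineFamily.
Variables (N : nat) (A : 'I_N -> 'M['F_2]_N).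

Lemma Aof_entry z a b : Aof A z a b = \sum_i z 0 i * A i a b.
Proof. by rewrite /Aof summxE; apply: eq_bigr => i _; rewrite mxE. Qed.

Lemma deg_le_Aof_entry a b : deg_le 1 (fun z => Aof A z a b).
Proof.
have := deg_le_sum (P := predT) (fun i _ => deg_leM (deg_le_var i) (deg_le_cst (A i a b) 0)).
by move/deg_le_eq; apply=> z; rewrite Aof_entry.
Qed.

Lemma tr_Aof z : (forall i, (A i)^T = A i) -> (Aof A z)^T = Aof A z.
Proof.
by move=> A_sym; rewrite linear_sum; apply: eq_bigr => i _; rewrite linearZ /= A_sym.
Qed.

Lemma Aof_diag z a : (forall i k, A i k k = (i == k)%:R) -> Aof A z a a = z 0 a.
Proof.
move=> A_diag; rewrite Aof_entry (bigD1 a) //= A_diag eqxx mulr1.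
rewrite big1 ?addr0 // => i /negbTE.
by rewrite A_diag => ->; rewrite mulr0.
Qed.

End AffineFamily.

Theorem lemma4p6 (N : nat) (A : 'I_N -> 'M['F_2]_N) (C : 'M['F_2]_N)
  (hAsym : forall i, (A i)^T = A i)
  (hAdiag : forall i k, A i k k = (i == k)%:R)
  (hCsym : C^T = C)
  (k : nat) (hk1 : (1 <= k)%N) (hkN : (k <= N)%N) :
  prob_unif (fun z => (\rank (Aof A z + C)%R <= k.-1)%N)
  <= (1 / (2 ^ N)%:R : rat) * (\sum_(0 <= i < k) 'C(N, i))%:R.
Proof.
pose M z := Aof A z + C.
have M_sym z : (M z)^T = M z by rewrite /M raddfD /= tr_Aof // hCsym.
have M_affine a b : deg_le 1 (fun z => M z a b).
  have := deg_leD (deg_le_Aof_entry A a b) (deg_le_cst (C a b) 1).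
  by move/deg_le_eq; apply=> z; rewrite mxE.
have M_diag z a : M z a a = z 0 a + C a a by rewrite mxE Aof_diag.
set S := [set z | (\rank (M z) <= k.-1)%N].
have reduce (T : {set 'I_N}) : #|T| = k.-1.+1 -> deg_le_on S k.-1 (monomial T).
  move=> card_T; exists (fun z => monomial T z - \det (pad_mx T (M z))).
    by have := deg_le_pad_mx_det M_sym M_affine M_diag T; rewrite card_T.
  by move=> z; rewrite inE => rank_le; rewrite det_pad_mx_eq0 ?subr0 // card_T.
have := card_le_of_deg_le_on (deg_le_on_all (deg_le_on_monomial reduce)).
rewrite prednK // => card_S.
rewrite /prob_unif card_mx card_Fp // mul1n mul1r [X in _ <= X]mulrC big_mkord.
by apply: ler_wpM2r; rewrite ?invr_ge0 ?ler0n ?ler_nat.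
Qed.
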